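(* Let $p$ be a prime and $n$ a positive integer. Let $\overline{m}=\min\{m\in\mathbb{N} : v_p((pm)!)\geq n\}$. Then $$\mathcal{Q}_n=\big(q_{n,0}G_0(X),\,q_{n,1}G_1(X),\dots,q_{n,\overline{m}}G_{\overline{m}}(X)\big),$$ where $q_{n,m}=p^{\,n-v_p((pm)!)}$ for $0\leq m<\overline{m}$ and $q_{n,\overline{m}}=1$. More generally, for each $j\in\{0,\dots,p-1\}$, $$\mathcal{Q}_{n,j}=\big(q_{n,0}G_0(X-j),\dots,q_{n,\overline{m}}G_{\overline{m}}(X-j)\big).$$
   Context: Fix a prime $p$ and $n\geq1$. For $j\in\{0,\dots,p-1\}$, $\mathcal{Q}_{n,j}=\bigcap_{i\in\{0,\dots,p^n-1\},\ i\equiv j\ (\mathrm{mod}\ p)}(p^n,X-i)\subseteq\mathbb{Z}[X]$, and $\mathcal{Q}_n=\mathcal{Q}_{n,0}$. For $k\geq1$, $G_k(X)=\prod_{h=0}^{k-1}(X-hp)$, and $G_0(X)=1$. $v_p$ is the $p$-adic valuation. *)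

From HB Require Import structures.
From mathcomp Require Import all_boot all_order all_algebra.
Set Implicit Arguments. Unset Strict Implicit. Unset Printing Implicit Defensive.
Import Order.TTheory GRing.Theory Num.Theory.
Local Open Scope ring_scope.

Definition in_ideal (s : seq {poly int}) (f : {poly int}) : Prop :=
  exists c : nat -> {poly int}, f = \sum_(i < size s) c i * s`_i.

Definition in_Qnj (p n j : nat) (f : {poly int}) : Prop :=
  forall i : nat, (i < p ^ n)%N -> (i %% p = j %% p)%N ->
    in_ideal [:: ((p ^ n)%N%:R)%:P; 'X - (i%:R)%:P] f.

Definition G (p k : nat) : {poly int} :=
  \prod_(h < k) ('X - ((h * p)%N%:R)%:P).

Definition q (p n mbar m : nat) : int :=
  if (m < mbar)%N then ((p ^ (n - logn p (p * m)`!))%N)%:R else 1.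

Definition gens (p n mbar j : nat) : seq {poly int} :=
  [seq (q p n mbar m)%:P * (G p m \Po ('X - (j%:R)%:P)) | m <- iota 0 mbar.+1].

From HB Require Import structures.
From mathcomp Require Import all_boot all_order all_algebra.
From mathcomp Require Import zify ring.
Import Order.TTheory GRing.Theory Num.Theory.
Local Open Scope ring_scope.

(* Fix j < p.  Since (d, X - x) = { f | d divides f(x) } and f(x) mod p^n only
   depends on x mod p^n, f lies in Q_{n,j} iff p^n divides f at every node
   j + k p (k in N).  Expand f in the Newton basis of these nodes,
     P_m(X) = prod_(h < m) (X - (j + h p)) = G_m(X - j),
   as f = Q P_mbar + sum_(m < mbar) a_m P_m.  Since P_m(j + k p) = p^m k^_m,
   which equals p^m m! for k = m and vanishes for k < m, strong induction on k
   shows that p^n | f(nodes) forces p^n | a_k p^k k!, i.e. q_{n,k} | a_k,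
   because v_p(p^k k!) = v_p((pk)!) by Legendre's formula.  Conversely each
   generator q_{n,m} P_m takes values in p^n Z at the nodes. *)

Lemma coprime_prod_between_multiples (p m : nat) : prime p ->
  coprime p (\prod_((p * m).+1 <= i < p * m.+1) i).
Proof.
move=> hp; rewrite prime_coprime // Euclid_dvd_prod //.
rewrite big1_seq // => i /andP[_]; rewrite mem_index_iota => /andP[lo hi].
apply/negP => /dvdnP[k def_i]; rewrite {}def_i in lo hi.
case: (leqP k m) => hkm.
- have : (k * p <= m * p)%N by rewrite leq_mul2r hkm orbT.
  lia.
- have : (m.+1 * p <= k * p)%N by rewrite leq_mul2r hkm orbT.
  lia.
Qed.

Lemma logn_fact_mul (p m : nat) : prime p ->
  logn p (p * m)`! = (m + logn p m`!)%N.
Proof.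
move=> hp; have p_gt0 := prime_gt0 hp.
elim: m => [|m IH]; first by rewrite muln0 logn1.
have le_pm : (p * m <= p * m.+1)%N by rewrite leq_mul2l ltnW ?orbT.
rewrite (fact_split le_pm) big_nat_recr /=; last by nia.
set B := \prod_(_ <= _ < _) _.
have B_gt0 : (0 < B)%N.
  by rewrite /B big_seq_cond prodn_cond_gt0 // => i /andP[]; rewrite mem_index_iota; lia.
rewrite !lognM ?fact_gt0 ?muln_gt0 ?p_gt0 ?B_gt0 //.
rewrite IH (logn_coprime (coprime_prod_between_multiples _ m hp)).
by rewrite (logn_prime p hp) eqxx -/(factorial m) -/(m`!); lia.
Qed.

(* If p^n divides a * N, then the power p^(n - v_p(N)) divides a: only the
   p-part of N can absorb powers of p. *)
Lemma dvdz_cancel_ppart (p n N : nat) (a : int) : prime p -> (0 < N)%N ->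
  (((p ^ n)%N%:R : int) %| a * N%:R)%Z ->
  (((p ^ (n - logn p N))%N%:R : int) %| a)%Z.
Proof.
move=> hp N_gt0; rewrite !dvdzE abszM !natz /=.
have [N' coN' def_N] := pfactor_coprime hp N_gt0.
set v := logn p N in def_N *; rewrite def_N mulnA mulnAC Gauss_dvdl ?coprimeXl //.
have [le_vn | lt_nv] := leqP v n; last by rewrite (_ : n - v = 0)%N ?dvd1n //; lia.
by rewrite -{1}(subnK le_vn) expnD dvdn_pmul2r // expn_gt0 prime_gt0.
Qed.

Lemma dvdn_pexp_sub_logn (p n N : nat) : prime p -> (0 < N)%N ->
  (p ^ n %| p ^ (n - logn p N) * N)%N.
Proof.
move=> hp N_gt0; apply: dvdn_trans (dvdn_mul (dvdnn _) (pfactor_dvdnn p N)).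
by rewrite -expnD dvdn_exp2l //; lia.
Qed.

Lemma dvdz_hornerB (d x y : int) (f : {poly int}) :
  (d %| x - y)%Z -> (d %| f.[x] - f.[y])%Z.
Proof.
move=> dvd_xy.
have /factor_theorem [g def_g] : root (f - f.[y]%:P) y.
  by rewrite /root hornerD hornerN hornerC subrr.
have : (f - f.[y]%:P).[x] = g.[x] * (x - y) by rewrite def_g hornerM hornerXsubC.
by rewrite hornerD hornerN hornerC => ->; apply: dvdz_mull.
Qed.

Lemma in_ideal_CXsubC (d x : int) (f : {poly int}) :
  in_ideal [:: d%:P; 'X - x%:P] f <-> (d %| f.[x])%Z.
Proof.
split=> [[c ->] | /dvdzP [e def_fx]].
  rewrite /= !big_ord_recl big_ord0 /= addr0 hornerD !hornerM hornerXsubC.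
  by rewrite hornerC subrr mulr0 addr0 dvdz_mull.
have /factor_theorem [g def_g] : root (f - f.[x]%:P) x.
  by rewrite /root hornerD hornerN hornerC subrr.
exists (fun i => if i == 0%N then e%:P else g).
by rewrite /= !big_ord_recl big_ord0 /= addr0 -def_g def_fx polyCM; ring.
Qed.

Section NewtonBasis.

Variables p j : nat.

Definition node (h : nat) : int := (j + h * p)%N%:R.

Definition newton (m : nat) : {poly int} := \prod_(h < m) ('X - (node h)%:P).

Lemma G_comp_shift (m : nat) : G p m \Po ('X - (j%:R)%:P) = newton m.
Proof.
elim: m => [|m IH]; first by rewrite /G /newton !big_ord0 comp_polyC.
rewrite /G /newton !big_ord_recr /= comp_polyM -/(G p m) IH -/(newton m).
by rewrite comp_polyB comp_polyX comp_polyC /node natrD polyCD opprD addrA.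
Qed.

Lemma newton_node (m k : nat) : (newton m).[node k] = (p ^ m * k ^_ m)%N%:R.
Proof.
elim: m => [|m IH]; first by rewrite /newton big_ord0 hornerC expn0.
rewrite /newton big_ord_recr /= hornerM -/(newton m) IH hornerXsubC /node ffactnSr.
have [le_mk | lt_km] := leqP m k; last by rewrite ffact_small // !muln0 mul0r.
rewrite -natrB; last by nia.
rewrite -natrM (_ : j + k * p - (j + m * p) = (k - m) * p)%N; last first.
  by rewrite mulnBl; lia.
by rewrite expnS; congr (_%:R); lia.
Qed.

Lemma newton_expansion (M : nat) (f : {poly int}) :
  exists (Q : {poly int}) (a : nat -> int),
    f = Q * newton M + \sum_(m < M) (a m)%:P * newton m.
Proof.
elim: M => [|M [Q [a def_f]]].
  by exists f, (fun _ => 0); rewrite /newton !big_ord0 mulr1 addr0.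
have /factor_theorem [Q' def_Q'] : root (Q - Q.[node M]%:P) (node M).
  by rewrite /root hornerD hornerN hornerC subrr.
exists Q', (fun m => if m == M then Q.[node M] else a m).
rewrite big_ord_recr /= eqxx (eq_bigr (fun m : 'I_M => (a m)%:P * newton m)).
  rewrite {1}def_f /newton big_ord_recr /= -/(newton M).
  set c := Q.[node M] in def_Q' *.
  by rewrite -(subrK c%:P Q) def_Q'; ring.
by move=> i _; rewrite ifN // neq_ltn ltn_ord.
Qed.

(* If d divides f at every node, then d divides a_k p^k k! for every
   coefficient a_k (k < M) of a Newton expansion of f; by strong induction on k,
   the value f(node k) only involves a_0, ..., a_k. *)
Lemma newton_coef_dvd (d : int) (M : nat) (Q f : {poly int}) (a : nat -> int) :
  f = Q * newton M + \sum_(m < M) (a m)%:P * newton m ->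
  (forall k, (d %| f.[node k])%Z) ->
  forall k, (k < M)%N -> (d %| a k * (p ^ k * k`!)%N%:R)%Z.
Proof.
move=> def_f dvd_f; elim/ltn_ind => k IH lt_kM.
have := dvd_f k.
rewrite def_f hornerD horner_sum hornerM newton_node ffact_small // muln0 mulr0 add0r.
under eq_bigr => m _ do rewrite hornerM hornerC newton_node.
rewrite (bigD1 (Ordinal lt_kM)) //= ffactnn.
set S := \sum_(i < M | _) _ => dvd_sum.
suff dvd_S : (d %| S)%Z by rewrite -(addrK S (a k * _)) rpredB.
apply: rpred_sum => m ne_mk.
have [lt_mk | lt_km | eq_mk] := ltngtP m k.
- rewrite -bin_ffact (mulnC 'C(k, m)) mulnA natrM mulrA.
  by apply/dvdz_mulr/IH => //; apply: ltn_trans lt_kM.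
- by rewrite ffact_small // muln0 mulr0 rpred0.
- by move: ne_mk; rewrite -val_eqE /= eq_mk eqxx.
Qed.

End NewtonBasis.

(* For j < p, f lies in Q_{n,j} iff p^n divides f at every node j + k p:
   the residues i < p^n with i = j mod p are exactly the nodes reduced mod p^n,
   and f(x) mod p^n only depends on x mod p^n. *)
Lemma in_QnjE (p n j : nat) (f : {poly int}) :
  (0 < p)%N -> (0 < n)%N -> (j < p)%N ->
  in_Qnj p n j f <-> forall k : nat, (((p ^ n)%N%:R : int) %| f.[node p j k])%Z.
Proof.
move=> p_gt0 n_gt0 lt_jp; split=> [inQ k | dvd_f i lt_i eq_ij].
- set x := (j + k * p)%N.
  have lt_x : (x %% p ^ n < p ^ n)%N by rewrite ltn_pmod // expn_gt0 p_gt0.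
  have eq_xj : (x %% p ^ n %% p = j %% p)%N.
    by rewrite modn_dvdm ?dvdn_exp // /x addnC modnMDl.
  have /in_ideal_CXsubC dvd_fr := inQ _ lt_x eq_xj.
  rewrite /node -/x -(subrK f.[(x %% p ^ n)%:R] f.[x%:R]) rpredD //.
  apply: dvdz_hornerB; rewrite {1}(divn_eq x (p ^ n)) natrD addrK natrM.
  exact: dvdz_mull (dvdzz _).
- apply/in_ideal_CXsubC.
  have -> : i = (j + i %/ p * p)%N.
    by rewrite {1}(divn_eq i p) eq_ij modn_small // addnC.
  exact: dvd_f.
Qed.

Section Generators.

Variables p n mbar j : nat.
Hypothesis p_prime : prime p.
Hypothesis n_le_vmbar : (n <= logn p (p * mbar)`!)%N.

Let p_gt0 : (0 < p)%N := prime_gt0 p_prime.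

Lemma logn_pexp_fact (m : nat) : logn p (p ^ m * m`!) = logn p (p * m)`!.
Proof.
by rewrite logn_fact_mul // lognM ?fact_gt0 ?expn_gt0 ?p_gt0 // pfactorK.
Qed.

Lemma size_gens : size (gens p n mbar j) = mbar.+1.
Proof. by rewrite size_map size_iota. Qed.

Lemma gens_nth (m : nat) : (m < mbar.+1)%N ->
  (gens p n mbar j)`_m = (q p n mbar m)%:P * newton p j m.
Proof.
by move=> lt_m; rewrite (nth_map 0%N) ?size_iota // nth_iota // G_comp_shift.
Qed.

(* Each generator q_{n,m} P_m is divisible by p^n at every node: its value
   q_{n,m} p^m k^_m is a multiple of q_{n,m} p^m m!, and v_p(p^m m!) = v_p((pm)!)
   is at least n when m = mbar. *)
Lemma gens_node_dvd (m k : nat) : (m < mbar.+1)%N ->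
  (((p ^ n)%N%:R : int) %| ((gens p n mbar j)`_m).[node p j k])%Z.
Proof.
move=> lt_m.
rewrite gens_nth // hornerM hornerC newton_node -bin_ffact /q.
have dvd_pm : (p ^ m * m`! %| p ^ m * ('C(k, m) * m`!))%N.
  exact: dvdn_mul (dvdnn _) (dvdn_mull _ (dvdnn _)).
case: ifP => [lt_m_mbar | /negbT]; rewrite ?mul1r -?natrM dvdzE !natz !absz_nat.
- have pm_gt0 : (0 < p ^ m * m`!)%N by rewrite muln_gt0 expn_gt0 p_gt0 fact_gt0.
  apply: dvdn_trans (dvdn_pexp_sub_logn _ n _ p_prime pm_gt0) _.
  by rewrite logn_pexp_fact dvdn_mul.
- rewrite -leqNgt => le_mbar_m.
  have eq_m : m = mbar by apply/eqP; rewrite eqn_leq le_mbar_m -ltnS lt_m.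
  subst m; apply: dvdn_trans _ dvd_pm; apply: dvdn_trans (pfactor_dvdnn p _).
  by rewrite dvdn_exp2l // logn_pexp_fact.
Qed.

Lemma in_ideal_gens_node_dvd (f : {poly int}) : in_ideal (gens p n mbar j) f ->
  forall k, (((p ^ n)%N%:R : int) %| f.[node p j k])%Z.
Proof.
move=> [c ->] k; rewrite horner_sum; apply: rpred_sum => m _.
rewrite hornerM dvdz_mull // gens_node_dvd //.
by rewrite -size_gens ltn_ord.
Qed.

(* Conversely, if p^n divides f at all nodes, expand f in the Newton basis up
   to P_mbar: p^n | a_k p^k k! forces q_{n,k} | a_k, so each a_k P_k is a
   multiple of the k-th generator and the remainder Q P_mbar of the last one. *)
Lemma node_dvd_in_ideal_gens (f : {poly int}) :
  (forall k, (((p ^ n)%N%:R : int) %| f.[node p j k])%Z) ->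
  in_ideal (gens p n mbar j) f.
Proof.
move=> dvd_f; have [Q [a def_f]] := newton_expansion p j mbar f.
have dvd_a := newton_coef_dvd _ _ _ _ _ _ _ def_f dvd_f.
exists (fun i => if (i < mbar)%N then (a i %/ q p n mbar i)%Z%:P else Q).
have q_mbar : q p n mbar mbar = 1 by rewrite /q ltnn.
rewrite size_gens big_ord_recr /= ltnn gens_nth // q_mbar mul1r def_f addrC.
congr (_ + _); apply: eq_bigr => i _; rewrite (ltn_ord i) (gens_nth _ (ltnW (ltn_ord i))).
rewrite mulrA -polyCM; congr (_%:P * _); apply/esym/eqP; rewrite -dvdz_eq /q ltn_ord.
rewrite -logn_pexp_fact; apply: dvdz_cancel_ppart => //.
  by rewrite muln_gt0 expn_gt0 p_gt0 fact_gt0.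
by apply: dvd_a.
Qed.

End Generators.

(* Main theorem.  Only v_p((p mbar)!) >= n is needed; the minimality of mbar
   merely makes the generating family irredundant. *)
Theorem mainTheorem16 (p n mbar : nat) (hp : prime p) (hn : (0 < n)%N)
  (hmbar : (n <= logn p (p * mbar)`!)%N)
  (hmin : forall m : nat, (m < mbar)%N -> (logn p (p * m)`! < n)%N) :
  forall j : nat, (j < p)%N ->
    forall f : {poly int}, in_Qnj p n j f <-> in_ideal (gens p n mbar j) f.
Proof.
move=> j lt_jp f.
apply: iff_trans (in_QnjE _ _ _ f (prime_gt0 hp) hn lt_jp) _; split.
- exact: node_dvd_in_ideal_gens.
- exact: in_ideal_gens_node_dvd.
Qed.
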